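(* Let $X$ be an arbitrary set, let $k: X\times X\to [0,+\infty]$ be a symmetric function, and let $\emptyset\neq H\subset L\subset X$. Then the rendezvous set $R(H,L)$ is nonempty.
   Context: For $H,L\subset X$ and $n\in\mathbb{N}$, the $n$-th rendezvous set of $L$ with respect to $H$ is $R_n(H,L):=\bigcap_{w_1,\dots,w_n\in H}\overline{\mathrm{conv}}\{\frac1n\sum_{j=1}^n k(x,w_j): x\in L\}$, where $\overline{\mathrm{conv}}$ denotes the closed convex hull in $\mathbb{R}\cup\{+\infty\}$ (a closed interval), and $R(H,L):=\bigcap_{n=1}^\infty R_n(H,L)$. Equivalently, $R(H,L)=[M(H,L),\overline{M}(H,L)]$ (with $[a,b]=\emptyset$ if $a>b$), where $M(H,L)=\lim_n M_n(H,L)$, $\overline{M}(H,L)=\lim_n\overline{M}_n(H,L)$, $M_n(H,L)=\sup_{w_1,\dots,w_n\in H}\inf_{x\in L}\frac1n\sum_{j=1}^n k(x,w_j)$ and $\overline{M}_n(H,L)=\inf_{w_1,\dots,w_n\in H}\sup_{x\in L}\frac1n\sum_{j=1}^n k(x,w_j)$. *)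

From mathcomp Require Import all_boot all_order all_algebra.
From mathcomp Require Import all_classical all_reals ereal.
Set Implicit Arguments. Unset Strict Implicit. Unset Printing Implicit Defensive.
Import Order.TTheory GRing.Theory Num.Theory.
Local Open Scope classical_set_scope.
Local Open Scope ring_scope.
Local Open Scope ereal_scope.

(* Closed convex hull in R ∪ {+oo} of a set S of extended reals: the closed
   interval [inf S, sup S] (empty when inf S > sup S, e.g. S empty). *)
Definition cl_conv (R : realType) (S : set (\bar R)) : set (\bar R) :=
  [set r | ereal_inf S <= r /\ r <= ereal_sup S].

Definition avg_ker (R : realType) (X : Type) (k : X -> X -> \bar R)
  (n : nat) (w : 'I_n -> X) (x : X) : \bar R :=
  ((n%:R)^-1)%:E * (\sum_(j < n) k x (w j)).

Definition rendezvous_n (R : realType) (X : Type) (k : X -> X -> \bar R)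
  (H L : set X) (n : nat) : set (\bar R) :=
  [set r | forall w : 'I_n -> X, (forall j, H (w j)) ->
     cl_conv [set avg_ker k w x | x in L] r].

Definition rendezvous (R : realType) (X : Type) (k : X -> X -> \bar R)
  (H L : set X) : set (\bar R) :=
  [set r | forall n : nat, (0 < n)%N -> rendezvous_n k H L n r].

From mathcomp Require Import all_boot all_order all_algebra.
From mathcomp Require Import all_classical all_reals ereal.
Set Implicit Arguments. Unset Strict Implicit. Unset Printing Implicit Defensive.
Import Order.TTheory GRing.Theory Num.Theory.
Local Open Scope classical_set_scope.
Local Open Scope ring_scope.
Local Open Scope ereal_scope.

(* Double counting.  For configurations w of size n and v of size m in H,
   averaging the potential of w over the points of v and the potential of v
   over the points of w give the same number, by symmetry of k.  As H <= L,
   the first average is at least the infimum over L of the potential of w,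
   and the second is at most the supremum over L of the potential of v.
   Hence every lower endpoint of the intervals defining R(H,L) lies below
   every upper endpoint, and the supremum of the lower endpoints belongs to
   all of them. *)

Definition emean {R : realType} {m : nat} (f : 'I_m -> \bar R) : \bar R :=
  ((m%:R)^-1)%:E * \sum_(i < m) f i.

Section ExtendedMean.
Variables (R : realType) (m : nat).
Hypothesis m_gt0 : (0 < m)%N.

Lemma emean_cst (a : \bar R) : emean (fun _ : 'I_m => a) = a.
Proof.
rewrite /emean sumr_const card_ord.
have -> : (a *+ m)%R = (m%:R)%:E * a by rewrite mule_natl.
rewrite muleA -EFinM mulVf ?mul1e //.
by rewrite pnatr_eq0 -lt0n.
Qed.

Lemma emean_ge (f : 'I_m -> \bar R) (a : \bar R) :
  (forall i, a <= f i) -> a <= emean f.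
Proof.
move=> af; rewrite -[leLHS]emean_cst.
by apply: lee_wpmul2l; [rewrite lee_fin invr_ge0 | apply: lee_sum].
Qed.

Lemma emean_le (f : 'I_m -> \bar R) (a : \bar R) :
  (forall i, f i <= a) -> emean f <= a.
Proof.
move=> fa; rewrite -[leRHS]emean_cst.
by apply: lee_wpmul2l; [rewrite lee_fin invr_ge0 | apply: lee_sum].
Qed.

End ExtendedMean.

Lemma emean_avg_kerC (R : realType) (X : Type) (k : X -> X -> \bar R)
    (k_ge0 : forall x y, 0 <= k x y) (k_sym : forall x y, k x y = k y x)
    n m (w : 'I_n -> X) (v : 'I_m -> X) :
  emean (fun i => avg_ker k w (v i)) = emean (fun j => avg_ker k v (w j)).
Proof.
have sum_mean (p q : nat) (f : 'I_p -> 'I_q -> \bar R) :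
    (forall i j, 0 <= f i j) ->
    emean (fun i => emean (f i)) =
    ((p%:R)^-1)%:E * (((q%:R)^-1)%:E * \sum_(i < p) \sum_(j < q) f i j).
  move=> f_ge0; rewrite /emean; congr (_ * _).
  by rewrite ge0_sume_distrr // => i _; exact: sume_ge0.
rewrite !sum_mean // muleCA; congr (_ * (_ * _)).
by rewrite exchange_big; apply: eq_bigr => j _; apply: eq_bigr => i _.
Qed.

Lemma ereal_inf_avg_ker_le_sup (R : realType) (X : Type) (k : X -> X -> \bar R)
    (k_ge0 : forall x y, 0 <= k x y) (k_sym : forall x y, k x y = k y x)
    (H L : set X) (HL : H `<=` L) n m (w : 'I_n -> X) (v : 'I_m -> X) :
  (0 < n)%N -> (0 < m)%N -> (forall j, H (w j)) -> (forall i, H (v i)) ->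
  ereal_inf [set avg_ker k w x | x in L] <= ereal_sup [set avg_ker k v x | x in L].
Proof.
move=> n_gt0 m_gt0 Hw Hv.
apply: (@le_trans _ _ (emean (fun i => avg_ker k w (v i)))).
  by apply: emean_ge => // i; apply: ereal_inf_lbound; exists (v i); first exact: HL.
rewrite emean_avg_kerC //; apply: emean_le => // j.
by apply: ereal_sup_ubound; exists (w j); first exact: HL.
Qed.

Lemma cl_conv_common_point (R : realType) (I : Type) (P : I -> Prop)
    (S : I -> set (\bar R)) :
  (forall i j, P i -> P j -> ereal_inf (S i) <= ereal_sup (S j)) ->
  exists r, forall i, P i -> cl_conv (S i) r.
Proof.
move=> inf_le_sup; exists (ereal_sup [set ereal_inf (S i) | i in P]) => i Pi.
split; first by apply: ereal_sup_ubound; exists i.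
by apply/ereal_supP => _ [j Pj <-]; exact: inf_le_sup.
Qed.

Theorem proposition2p2 (R : realType) (X : Type) (k : X -> X -> \bar R)
  (k_ge0 : forall x y, 0 <= k x y) (k_sym : forall x y, k x y = k y x)
  (H L : set X) (HL : H `<=` L) (H0 : H !=set0) :
  rendezvous k H L !=set0.
Proof.
pose admissible (w : {n : nat & 'I_n -> X}) :=
  (0 < projT1 w)%N /\ forall j, H (projT2 w j).
pose potentials (w : {n : nat & 'I_n -> X}) :=
  [set avg_ker k (projT2 w) x | x in L].
suff [r r_in] : exists r, forall w, admissible w -> cl_conv (potentials w) r.
  by exists r => n n_gt0 w Hw; exact: (r_in (existT _ n w)).
apply: cl_conv_common_point => -[n w] [m v] [/= n_gt0 Hw] [/= m_gt0 Hv].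
exact: (ereal_inf_avg_ker_le_sup k_ge0 k_sym HL n_gt0 m_gt0 Hw Hv).
Qed.
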